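(* Let $\psi=(N,h):\Sigma\to\mathbb{H}^2\times\mathbb{R}$ be a conformal immersion with regular vertical projection which, with respect to its canonical orientation ($u>0$), has constant mean curvature $H=1/2$. Then its hyperbolic Gauss map $G:\Sigma\to\mathbb{H}^2$ is harmonic, and $\langle G_z,G_z\rangle=-Q$, where $Q\,dz^2$ is the Abresch–Rosenberg differential of $\psi$.
   Context: $\mathbb{L}^4$ is $\mathbb{R}^4$ with metric $\langle,\rangle=-dx_0^2+dx_1^2+dx_2^2+dx_3^2$, $\mathbb{L}^3$ the subspace of the first three coordinates, $\mathbb{H}^2=\{x\in\mathbb{L}^3:\langle x,x\rangle=-1,x_0>0\}$, and $\mathbb{H}^2\times\mathbb{R}\subset\mathbb{L}^4$. A surface is a conformal immersion $\psi=(N,h):\Sigma\to\mathbb{H}^2\times\mathbb{R}$ of a connected Riemann surface, with $N:\Sigma\to\mathbb{H}^2$ (vertical projection), $h:\Sigma\to\mathbb{R}$ (height function, assumed not locally constant), induced metric $\lambda|dz|^2$ for a local conformal parameter $z$. Its unit normal $\eta=(\hat N,u)$ is the unit vector field in $\mathbb{L}^4$ orthogonal to $\psi_z,\psi_{\bar z}$ and to $N$ (i.e. normal to $\psi$ and tangent to $\mathbb{H}^2\times\mathbb{R}$); $u$ is the angle function. The Hopf differential is $p\,dz^2=-\langle\psi_z,\eta_z\rangle dz^2$, $H$ is the mean curvature, and the Abresch–Rosenberg differential is $Q\,dz^2$ with $Q=2Hp+h_z^2$. $\psi$ has regular vertical projection if $dN$ is an isomorphism everywhere, equivalently $u$ never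 vanishes; such a surface is canonically oriented so that $u>0$. Its hyperbolic Gauss map is the map $G:\Sigma\to\mathbb{H}^2$ defined by $(G,1)=\frac1u(\eta+N)$ (this vector lies in the future light cone and has last coordinate $1$). *)

From Stdlib Require Import Reals List.
From Coquelicot Require Import Coquelicot.
Open Scope R_scope.

(* A point of R^4 = L^4 (or of L^3, using coordinates 0,1,2) is a coordinate
   function nat -> R; only coordinates 0..3 are ever read. *)
Definition vec := nat -> R.
Definition lor3 (v w : vec) : R := - v 0%nat * w 0%nat + v 1%nat * w 1%nat + v 2%nat * w 2%nat.
Definition lor4 (v w : vec) : R := lor3 v w + v 3%nat * w 3%nat.

Definition dx (f : R -> R -> vec) : R -> R -> vec :=
  fun x y i => Derive (fun t => f t y i) x.
Definition dy (f : R -> R -> vec) : R -> R -> vec :=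
  fun x y i => Derive (fun t => f x t i) y.
Definition lap (f : R -> R -> vec) : R -> R -> vec :=
  fun x y i => dx (dx f) x y i + dy (dy f) x y i.

Definition cvec := nat -> C.
Definition lor3C (v w : cvec) : C :=
  (- (v 0%nat * w 0%nat) + v 1%nat * w 1%nat + v 2%nat * w 2%nat)%C.
Definition lor4C (v w : cvec) : C := (lor3C v w + v 3%nat * w 3%nat)%C.
Definition dz (f : R -> R -> vec) (x y : R) : cvec :=
  fun i => (RtoC (/2) * (RtoC (dx f x y i) - Ci * RtoC (dy f x y i)))%C.

Fixpoint pd (l : list bool) (f : R -> R -> R) : R -> R -> R :=
  match l with
  | nil => f
  | b :: l' => let g := pd l' f in
      if b then fun x y => Derive (fun t => g t y) x
      else fun x y => Derive (fun t => g x t) y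
  end.

Definition smooth_on (Om : R -> R -> Prop) (f : R -> R -> R) : Prop :=
  forall (l : list bool) (x y : R), Om x y ->
    ex_derive (fun t => pd l f t y) x /\ ex_derive (fun t => pd l f x t) y /\
    continuous (fun p : R * R => pd l f (fst p) (snd p)) (x, y).

Definition smooth_vec_on (n : nat) (Om : R -> R -> Prop) (f : R -> R -> vec) : Prop :=
  forall i, (i < n)%nat -> smooth_on Om (fun x y => f x y i).

Definition open2 (U : R -> R -> Prop) : Prop :=
  forall x y, U x y -> exists e, 0 < e /\
    forall x' y', (x' - x) ^ 2 + (y' - y) ^ 2 < e ^ 2 -> U x' y'.

Definition connected2 (Om : R -> R -> Prop) : Prop :=
  (exists x y, Om x y) /\
  forall A : R -> R -> Prop,
    open2 A -> open2 (fun x y => Om x y /\ ~ A x y) ->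
    (exists x y, Om x y /\ A x y) -> forall x y, Om x y -> A x y.

Definition not_locally_constant (Om : R -> R -> Prop) (h : R -> R -> R) : Prop :=
  forall U : R -> R -> Prop, open2 U -> (forall x y, U x y -> Om x y) ->
    (exists x y, U x y) ->
    ~ (exists c, forall x y, U x y -> h x y = c).

(* The immersion psi = (N, h) : Om -> H^2 x R  (N = coordinates 0..2, h = coordinate 3),
   conformal: <psi_x,psi_x> = <psi_y,psi_y> = lambda > 0, <psi_x,psi_y> = 0. *)
Definition conformal_immersion_H2xR (Om : R -> R -> Prop) (psi : R -> R -> vec) : Prop :=
  smooth_vec_on 4 Om psi /\
  forall x y, Om x y ->
    lor3 (psi x y) (psi x y) = -1 /\ 0 < psi x y 0%nat /\
    lor4 (dx psi x y) (dx psi x y) = lor4 (dy psi x y) (dy psi x y) /\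
    lor4 (dx psi x y) (dy psi x y) = 0 /\
    0 < lor4 (dx psi x y) (dx psi x y).

Definition lam (psi : R -> R -> vec) (x y : R) : R := lor4 (dx psi x y) (dx psi x y).

(* eta = (Nhat, u) is the unit normal of psi, tangent to H^2 x R
   (orthogonal to psi_x, psi_y and to (N,0)), with u = eta_3 > 0 everywhere:
   regular vertical projection with the canonical orientation. *)
Definition canonical_unit_normal (Om : R -> R -> Prop) (psi eta : R -> R -> vec) : Prop :=
  smooth_vec_on 4 Om eta /\
  forall x y, Om x y ->
    lor4 (eta x y) (dx psi x y) = 0 /\ lor4 (eta x y) (dy psi x y) = 0 /\
    lor3 (eta x y) (psi x y) = 0 /\ lor4 (eta x y) (eta x y) = 1 /\
    0 < eta x y 3%nat.

Definition meanH (psi eta : R -> R -> vec) (x y : R) : R :=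
  lor4 (lap psi x y) (eta x y) / (2 * lam psi x y).

Definition hopf (psi eta : R -> R -> vec) (x y : R) : C :=
  (- lor4C (dz psi x y) (dz eta x y))%C.

Definition abreschQ (psi eta : R -> R -> vec) (x y : R) : C :=
  (RtoC (2 * meanH psi eta x y) * hopf psi eta x y
   + dz psi x y 3%nat * dz psi x y 3%nat)%C.

(* Hyperbolic Gauss map: (G,1) = (eta + N)/u, i.e. G_i = (eta_i + N_i)/u, i = 0,1,2 *)
Definition hypGauss (psi eta : R -> R -> vec) : R -> R -> vec :=
  fun x y i => (eta x y i + psi x y i) / eta x y 3%nat.

(* Harmonic map into H^2 subset L^3: the tension field, i.e. the tangential part
   Delta G + <Delta G, G> G of the Laplacian, vanishes (conformal parameter). *)
Definition harmonic_H2 (Om : R -> R -> Prop) (G : R -> R -> vec) : Prop :=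
  forall x y, Om x y -> forall i, (i < 3)%nat ->
    lap G x y i + lor3 (lap G x y) (G x y) * G x y i = 0.

From Stdlib Require Import Reals Lra Lia Nsatz.
From Coquelicot Require Import Coquelicot.
Open Scope R_scope.

(* Put nu = eta + (N, 0): a null vector field with last coordinate u, and (G, 1) = nu / u.
   At each point expand every vector in the orthogonal frame (psi_x, psi_y, eta, (N, 0)) of L^4.
   Differentiating the identities that define psi and eta, together with <Delta psi, eta> = lam
   (that is, H = 1/2), gives the frame coordinates of psi_xx, psi_xy, psi_yy, eta_x, eta_y and
   Delta eta, hence of nu_x, nu_y and Delta nu, as rational functions of lam, u, h_x, h_y, lam_x,
   lam_y, L = <psi_xx, eta> and M = <psi_xy, eta>, subject to h_x^2 + h_y^2 = lam (1 - u^2).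
   Since nu is null, <G_x, G_y> = <nu_x, nu_y> / u^2 and so on, and a polynomial identity gives
   <G_z, G_z> = -Q. The same computation shows that Delta (nu / u) lies in the plane spanned by
   nu and e3 = (0, 0, 0, 1), so Delta G is proportional to G and has no part tangent to H^2. *)

(** * Lorentzian algebra and orthogonal frames *)

Definition vadd (v w : vec) : vec := fun i => v i + w i.
Definition vscale (r : R) (v : vec) : vec := fun i => r * v i.
Definition hat (v : vec) : vec := fun i => match i with 3%nat => 0 | _ => v i end.
Definition e3 : vec := fun i => match i with 3%nat => 1 | _ => 0 end.

Lemma lor3_sym v w : lor3 v w = lor3 w v.
Proof. unfold lor3; ring. Qed.

Lemma lor4_sym v w : lor4 v w = lor4 w v.
Proof. unfold lor4, lor3; ring. Qed.

Lemma lor4_vadd v w z : lor4 (vadd v w) z = lor4 v z + lor4 w z.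
Proof. unfold lor4, lor3, vadd; ring. Qed.

Lemma lor4_vscale r v z : lor4 (vscale r v) z = r * lor4 v z.
Proof. unfold lor4, lor3, vscale; ring. Qed.

Lemma lor4_hat v w : lor4 (hat v) w = lor3 v w.
Proof. unfold lor4, lor3, hat; ring. Qed.

Lemma lor3_hat_r v w : lor3 v (hat w) = lor3 v w.
Proof. reflexivity. Qed.

Lemma lor4_hat_r v w : lor4 v (hat w) = lor3 v w.
Proof. unfold lor4, lor3, hat; ring. Qed.

Lemma lor4_e3 v : lor4 e3 v = v 3%nat.
Proof. unfold lor4, lor3, e3; ring. Qed.

Lemma lor3_lor4 v w : lor3 v w = lor4 v w - v 3%nat * w 3%nat.
Proof. unfold lor4; ring. Qed.

Lemma lor3_ext v v' w w' : (forall i, (i < 3)%nat -> v i = v' i) ->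
  (forall i, (i < 3)%nat -> w i = w' i) -> lor3 v w = lor3 v' w'.
Proof. intros Hv Hw. unfold lor3. rewrite !Hv, !Hw by lia. reflexivity. Qed.

Lemma lor4_ext v v' w w' : (forall i, (i < 4)%nat -> v i = v' i) ->
  (forall i, (i < 4)%nat -> w i = w' i) -> lor4 v w = lor4 v' w'.
Proof. intros Hv Hw. unfold lor4, lor3. rewrite !Hv, !Hw by lia. reflexivity. Qed.

Lemma lor4_lap F x y w : lor4 (lap F x y) w = lor4 (dx (dx F) x y) w + lor4 (dy (dy F) x y) w.
Proof. exact (lor4_vadd (dx (dx F) x y) (dy (dy F) x y) w). Qed.

Lemma lor3_lap F x y w : lor3 (lap F x y) w = lor3 (dx (dx F) x y) w + lor3 (dy (dy F) x y) w.
Proof. unfold lor3, lap; ring. Qed.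

Lemma tension_eq0_of_parallel (V G : vec) c : lor3 G G = -1 ->
  (forall i, (i < 3)%nat -> V i = c * G i) -> forall i, (i < 3)%nat -> V i + lor3 V G * G i = 0.
Proof.
  intros GG HV i Hi.
  assert (VG : lor3 V G = c * lor3 G G) by (unfold lor3; rewrite !HV by lia; ring).
  rewrite VG, GG, (HV i Hi). ring.
Qed.

Lemma lor3C_dz F G x y : lor3C (dz F x y) (dz G x y) =
  ((lor3 (dx F x y) (dx G x y) - lor3 (dy F x y) (dy G x y)) / 4,
   - (lor3 (dx F x y) (dy G x y) + lor3 (dy F x y) (dx G x y)) / 4).
Proof. unfold lor3C, dz, lor3. apply injective_projections; cbn; field. Qed.

Lemma lor4C_dz F G x y : lor4C (dz F x y) (dz G x y) =
  ((lor4 (dx F x y) (dx G x y) - lor4 (dy F x y) (dy G x y)) / 4,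
   - (lor4 (dx F x y) (dy G x y) + lor4 (dy F x y) (dx G x y)) / 4).
Proof. unfold lor4C, lor3C, dz, lor4, lor3. apply injective_projections; cbn; field. Qed.

Definition det3 a b c d e f g h i := a * (e * i - f * h) - b * (d * i - f * g) + c * (d * h - e * g).

Definition det4 a0 a1 a2 a3 b0 b1 b2 b3 c0 c1 c2 c3 d0 d1 d2 d3 :=
  a0 * det3 b1 b2 b3 c1 c2 c3 d1 d2 d3 - a1 * det3 b0 b2 b3 c0 c2 c3 d0 d2 d3
  + a2 * det3 b0 b1 b3 c0 c1 c3 d0 d1 d3 - a3 * det3 b0 b1 b2 c0 c1 c2 d0 d1 d2.

Lemma lor4_gram_det (a b c d : vec) :
  det4 (lor4 a a) (lor4 a b) (lor4 a c) (lor4 a d) (lor4 b a) (lor4 b b) (lor4 b c) (lor4 b d)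
       (lor4 c a) (lor4 c b) (lor4 c c) (lor4 c d) (lor4 d a) (lor4 d b) (lor4 d c) (lor4 d d)
  = - (det4 (a 0%nat) (a 1%nat) (a 2%nat) (a 3%nat) (b 0%nat) (b 1%nat) (b 2%nat) (b 3%nat)
            (c 0%nat) (c 1%nat) (c 2%nat) (c 3%nat) (d 0%nat) (d 1%nat) (d 2%nat) (d 3%nat)) ^ 2.
Proof. unfold det4, det3, lor4, lor3. ring. Qed.

Lemma det4_kernel a0 a1 a2 a3 b0 b1 b2 b3 c0 c1 c2 c3 d0 d1 d2 d3 s0 s1 s2 s3 :
  det4 a0 a1 a2 a3 b0 b1 b2 b3 c0 c1 c2 c3 d0 d1 d2 d3 <> 0 ->
  a0 * s0 + a1 * s1 + a2 * s2 + a3 * s3 = 0 -> b0 * s0 + b1 * s1 + b2 * s2 + b3 * s3 = 0 ->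
  c0 * s0 + c1 * s1 + c2 * s2 + c3 * s3 = 0 -> d0 * s0 + d1 * s1 + d2 * s2 + d3 * s3 = 0 ->
  s0 = 0 /\ s1 = 0 /\ s2 = 0 /\ s3 = 0.
Proof.
  intros Hdet Ha Hb Hc Hd.
  set (D := det4 a0 a1 a2 a3 b0 b1 b2 b3 c0 c1 c2 c3 d0 d1 d2 d3) in Hdet.
  (* Cramer's rule: D * s_k is the determinant with column k replaced by the right-hand side. *)
  set (ra := a0 * s0 + a1 * s1 + a2 * s2 + a3 * s3) in Ha.
  set (rb := b0 * s0 + b1 * s1 + b2 * s2 + b3 * s3) in Hb.
  set (rc := c0 * s0 + c1 * s1 + c2 * s2 + c3 * s3) in Hc.
  set (rd := d0 * s0 + d1 * s1 + d2 * s2 + d3 * s3) in Hd.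
  assert (E0 : D * s0 = det4 ra a1 a2 a3 rb b1 b2 b3 rc c1 c2 c3 rd d1 d2 d3)
    by (unfold D, ra, rb, rc, rd, det4, det3; ring).
  assert (E1 : D * s1 = det4 a0 ra a2 a3 b0 rb b2 b3 c0 rc c2 c3 d0 rd d2 d3)
    by (unfold D, ra, rb, rc, rd, det4, det3; ring).
  assert (E2 : D * s2 = det4 a0 a1 ra a3 b0 b1 rb b3 c0 c1 rc c3 d0 d1 rd d3)
    by (unfold D, ra, rb, rc, rd, det4, det3; ring).
  assert (E3 : D * s3 = det4 a0 a1 a2 ra b0 b1 b2 rb c0 c1 c2 rc d0 d1 d2 rd)
    by (unfold D, ra, rb, rc, rd, det4, det3; ring).
  rewrite Ha, Hb, Hc, Hd in E0, E1, E2, E3.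
  unfold det4, det3 in E0, E1, E2, E3.
  repeat split; apply (Rmult_eq_reg_l D); auto; lra.
Qed.

Record coords := Coords { cX : R; cY : R; cE : R; cN : R }.

Definition coords_add (a b : coords) : coords :=
  Coords (cX a + cX b) (cY a + cY b) (cE a + cE b) (cN a + cN b).
Definition coords_scale (r : R) (a : coords) : coords :=
  Coords (r * cX a) (r * cY a) (r * cE a) (r * cN a).
(* The Lorentzian product in an orthogonal frame with Gram matrix diag(l, l, 1, -1). *)
Definition coords_lor4 (l : R) (a b : coords) : R :=
  (cX a * cX b + cY a * cY b) / l + cE a * cE b - cN a * cN b.

Definition frame_coords (X Y E N v : vec) : coords :=
  Coords (lor4 v X) (lor4 v Y) (lor4 v E) (lor4 v N).

Lemma frame_coords_vadd X Y E N v w :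
  frame_coords X Y E N (vadd v w) = coords_add (frame_coords X Y E N v) (frame_coords X Y E N w).
Proof. unfold frame_coords, coords_add; cbn. rewrite !lor4_vadd. reflexivity. Qed.

Lemma frame_coords_vscale X Y E N r v :
  frame_coords X Y E N (vscale r v) = coords_scale r (frame_coords X Y E N v).
Proof. unfold frame_coords, coords_scale; cbn. rewrite !lor4_vscale. reflexivity. Qed.

Lemma frame_coords_hat X Y E N v :
  frame_coords X Y E N (hat v)
  = coords_add (frame_coords X Y E N v) (coords_scale (- v 3%nat) (frame_coords X Y E N e3)).
Proof.
  unfold frame_coords, coords_add, coords_scale; cbn.
  rewrite !lor4_hat, !lor3_lor4, !lor4_e3. f_equal; ring.
Qed.

Lemma frame_coords_ext X Y E N v w : (forall i, (i < 4)%nat -> v i = w i) ->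
  frame_coords X Y E N v = frame_coords X Y E N w.
Proof.
  intros Hvw. unfold frame_coords.
  rewrite (lor4_ext v w X X), (lor4_ext v w Y Y), (lor4_ext v w E E), (lor4_ext v w N N); auto.
Qed.

Section OrthogonalFrame.

Variables (X Y E N : vec) (l : R).
Hypotheses (l_neq0 : l <> 0)
  (XX : lor4 X X = l) (YY : lor4 Y Y = l) (EE : lor4 E E = 1) (NN : lor4 N N = -1)
  (XY : lor4 X Y = 0) (XE : lor4 X E = 0) (XN : lor4 X N = 0)
  (YE : lor4 Y E = 0) (YN : lor4 Y N = 0) (EN : lor4 E N = 0).

Lemma frame_orthogonal_eq0 r : lor4 r X = 0 -> lor4 r Y = 0 -> lor4 r E = 0 -> lor4 r N = 0 ->
  forall i, (i < 4)%nat -> r i = 0.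
Proof.
  intros rX rY rE rN i Hi.
  assert (det_neq0 : det4 (X 0%nat) (X 1%nat) (X 2%nat) (X 3%nat) (Y 0%nat) (Y 1%nat) (Y 2%nat) (Y 3%nat)
            (E 0%nat) (E 1%nat) (E 2%nat) (E 3%nat) (N 0%nat) (N 1%nat) (N 2%nat) (N 3%nat) <> 0).
  { intro H0. pose proof (lor4_gram_det X Y E N) as G.
    rewrite H0, XX, YY, EE, NN, XY, XE, XN, YE, YN, EN, (lor4_sym Y X), XY, (lor4_sym E X), XE,
      (lor4_sym N X), XN, (lor4_sym E Y), YE, (lor4_sym N Y), YN, (lor4_sym N E), EN in G.
    unfold det4, det3 in G. apply l_neq0. nra. }
  assert (coord_form : forall w, lor4 r w
    = w 0%nat * (- r 0%nat) + w 1%nat * r 1%nat + w 2%nat * r 2%nat + w 3%nat * r 3%nat)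
    by (intros; unfold lor4, lor3; ring).
  rewrite coord_form in rX, rY, rE, rN.
  destruct (det4_kernel _ _ _ _ _ _ _ _ _ _ _ _ _ _ _ _ _ _ _ _ det_neq0 rX rY rE rN)
    as [r0 [r1 [r2 r3]]].
  destruct i as [|[|[|[|i]]]]; lra || lia.
Qed.

Lemma frame_expansion v i : (i < 4)%nat ->
  v i = (lor4 v X * X i + lor4 v Y * Y i) / l + lor4 v E * E i - lor4 v N * N i.
Proof.
  set (r := fun j => v j - ((lor4 v X * X j + lor4 v Y * Y j) / l + lor4 v E * E j - lor4 v N * N j)).
  assert (r_lor4 : forall w, lor4 r w = lor4 v w - ((lor4 v X * lor4 X w + lor4 v Y * lor4 Y w) / l
                     + lor4 v E * lor4 E w - lor4 v N * lor4 N w)).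
  { intros w. unfold r, lor4, lor3. field. exact l_neq0. }
  intros Hi. enough (r i = 0) by (unfold r in *; lra).
  apply frame_orthogonal_eq0; auto.
  - rewrite r_lor4, XX, (lor4_sym Y X), XY, (lor4_sym E X), XE, (lor4_sym N X), XN. field. exact l_neq0.
  - rewrite r_lor4, XY, YY, (lor4_sym E Y), YE, (lor4_sym N Y), YN. field. exact l_neq0.
  - rewrite r_lor4, XE, YE, EE, (lor4_sym N E), EN. field. exact l_neq0.
  - rewrite r_lor4, XN, YN, EN, NN. field. exact l_neq0.
Qed.

Lemma lor4_frame v w :
  lor4 v w = coords_lor4 l (frame_coords X Y E N v) (frame_coords X Y E N w).
Proof.
  unfold coords_lor4, frame_coords; cbn.
  unfold lor4 at 1, lor3.
  rewrite (frame_expansion v 0%nat), (frame_expansion v 1%nat), (frame_expansion v 2%nat),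
    (frame_expansion v 3%nat) by lia.
  rewrite (lor4_sym w X), (lor4_sym w Y), (lor4_sym w E), (lor4_sym w N).
  unfold lor4, lor3. field. exact l_neq0.
Qed.

Lemma frame_coords_inj v w : frame_coords X Y E N v = frame_coords X Y E N w ->
  forall i, (i < 4)%nat -> v i = w i.
Proof.
  intros Hvw i Hi. injection Hvw as H1 H2 H3 H4.
  rewrite (frame_expansion v i Hi), (frame_expansion w i Hi), H1, H2, H3, H4. reflexivity.
Qed.

End OrthogonalFrame.

(** * Calculus in the plane *)

Lemma open2_locally_2d Om x y : open2 Om -> Om x y -> locally_2d Om x y.
Proof.
  intros Ho H. destruct (Ho x y H) as [e [He Hball]].
  assert (Hd : 0 < e / 2) by lra. exists (mkposreal _ Hd); cbn.
  intros a b Ha Hb. apply Hball.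
  rewrite <- (pow2_abs (a - x)), <- (pow2_abs (b - y)).
  pose proof (Rabs_pos (a - x)). pose proof (Rabs_pos (b - y)). nra.
Qed.

Lemma open2_locally_x Om x y : open2 Om -> Om x y -> locally x (fun t => Om t y).
Proof.
  intros Ho H. destruct (open2_locally_2d Om x y Ho H) as [d Hd].
  exists d. intros t Ht. apply Hd; [exact Ht |]. rewrite Rminus_diag, Rabs_R0. apply cond_pos.
Qed.

Lemma open2_locally_y Om x y : open2 Om -> Om x y -> locally y (fun t => Om x t).
Proof.
  intros Ho H. destruct (open2_locally_2d Om x y Ho H) as [d Hd].
  exists d. intros t Ht. apply Hd; [| exact Ht]. rewrite Rminus_diag, Rabs_R0. apply cond_pos.
Qed.

Lemma pd_app l l' f : pd l (pd l' f) = pd (l ++ l') f.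
Proof. induction l as [|b l IH]; cbn; [reflexivity | now rewrite IH]. Qed.

Lemma smooth_on_pd Om f l : smooth_on Om f -> smooth_on Om (pd l f).
Proof. intros Hs l' x y H. rewrite pd_app. exact (Hs _ x y H). Qed.

Lemma smooth_vec_dx n Om F : smooth_vec_on n Om F -> smooth_vec_on n Om (dx F).
Proof. intros Hs i Hi. exact (smooth_on_pd Om _ (true :: nil) (Hs i Hi)). Qed.

Lemma smooth_vec_dy n Om F : smooth_vec_on n Om F -> smooth_vec_on n Om (dy F).
Proof. intros Hs i Hi. exact (smooth_on_pd Om _ (false :: nil) (Hs i Hi)). Qed.

Lemma pd_plus Om f g l x y : open2 Om -> smooth_on Om f -> smooth_on Om g -> Om x y ->
  pd l (fun a b => f a b + g a b) x y = pd l f x y + pd l g x y.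
Proof.
  intros Ho Hf Hg. revert x y. induction l as [|[|] l IH]; intros x y H; cbn; [reflexivity | |].
  - rewrite (Derive_ext_loc _ (fun t => pd l f t y + pd l g t y)).
    + apply Derive_plus; [apply (Hf l x y H) | apply (Hg l x y H)].
    + apply (filter_imp _ _ (fun t Ht => IH t y Ht)), (open2_locally_x Om x y Ho H).
  - rewrite (Derive_ext_loc _ (fun t => pd l f x t + pd l g x t)).
    + apply Derive_plus; [apply (Hf l x y H) | apply (Hg l x y H)].
    + apply (filter_imp _ _ (fun t Ht => IH x t Ht)), (open2_locally_y Om x y Ho H).
Qed.

Lemma smooth_on_plus Om f g : open2 Om -> smooth_on Om f -> smooth_on Om g ->
  smooth_on Om (fun a b => f a b + g a b).
Proof.
  intros Ho Hf Hg l x y H.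
  destruct (Hf l x y H) as [fx [fy fc]]. destruct (Hg l x y H) as [gx [gy gc]].
  repeat split.
  - apply (ex_derive_ext_loc (fun t => pd l f t y + pd l g t y));
      [| exact (ex_derive_plus (fun t => pd l f t y) (fun t => pd l g t y) x fx gx)].
    apply (filter_imp _ _ (fun t Ht => eq_sym (pd_plus Om f g l t y Ho Hf Hg Ht))).
    exact (open2_locally_x Om x y Ho H).
  - apply (ex_derive_ext_loc (fun t => pd l f x t + pd l g x t));
      [| exact (ex_derive_plus (fun t => pd l f x t) (fun t => pd l g x t) y fy gy)].
    apply (filter_imp _ _ (fun t Ht => eq_sym (pd_plus Om f g l x t Ho Hf Hg Ht))).
    exact (open2_locally_y Om x y Ho H).
  - apply (continuous_ext_loc _ (fun p : R * R => pd l f (fst p) (snd p) + pd l g (fst p) (snd p))).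
    + apply (proj1 (locally_2d_locally
        (fun a b => pd l f a b + pd l g a b = pd l (fun a b => f a b + g a b) a b) x y)).
      apply (locally_2d_impl Om); [| exact (open2_locally_2d Om x y Ho H)].
      apply locally_2d_forall. intros a b Hab. exact (eq_sym (pd_plus Om f g l a b Ho Hf Hg Hab)).
    + exact (continuous_plus _ _ _ fc gc).
Qed.

Lemma smooth_vec_lap n Om F : open2 Om -> smooth_vec_on n Om F -> smooth_vec_on n Om (lap F).
Proof.
  intros Ho Hs i Hi.
  apply (smooth_on_plus Om (fun a b => dx (dx F) a b i) (fun a b => dy (dy F) a b i) Ho).
  - exact (smooth_vec_dx n Om _ (smooth_vec_dx n Om F Hs) i Hi).
  - exact (smooth_vec_dy n Om _ (smooth_vec_dy n Om F Hs) i Hi).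
Qed.

Lemma dx_lap n Om F x y i : open2 Om -> smooth_vec_on n Om F -> Om x y -> (i < n)%nat ->
  dx (lap F) x y i = dx (dx (dx F)) x y i + dx (dy (dy F)) x y i.
Proof.
  intros Ho Hs H Hi.
  exact (pd_plus Om (fun a b => dx (dx F) a b i) (fun a b => dy (dy F) a b i) (true :: nil) x y Ho
    (smooth_vec_dx n Om _ (smooth_vec_dx n Om F Hs) i Hi)
    (smooth_vec_dy n Om _ (smooth_vec_dy n Om F Hs) i Hi) H).
Qed.

Lemma dy_lap n Om F x y i : open2 Om -> smooth_vec_on n Om F -> Om x y -> (i < n)%nat ->
  dy (lap F) x y i = dy (dx (dx F)) x y i + dy (dy (dy F)) x y i.
Proof.
  intros Ho Hs H Hi.
  exact (pd_plus Om (fun a b => dx (dx F) a b i) (fun a b => dy (dy F) a b i) (false :: nil) x y Ho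
    (smooth_vec_dx n Om _ (smooth_vec_dx n Om F Hs) i Hi)
    (smooth_vec_dy n Om _ (smooth_vec_dy n Om F Hs) i Hi) H).
Qed.

Lemma lap_ext_coord F G x y i : (forall a b, F a b i = G a b i) -> lap F x y i = lap G x y i.
Proof.
  intros E. unfold lap, dx, dy. f_equal; apply Derive_ext; intros t; apply Derive_ext; intros s; apply E.
Qed.

Lemma lap_vadd_coord Om F G x y i : open2 Om ->
  smooth_on Om (fun a b => F a b i) -> smooth_on Om (fun a b => G a b i) -> Om x y ->
  lap (fun a b => vadd (F a b) (G a b)) x y i = lap F x y i + lap G x y i.
Proof.
  intros Ho HF HG H.
  transitivity (pd (true :: true :: nil) (fun a b => F a b i + G a b i) x y
                + pd (false :: false :: nil) (fun a b => F a b i + G a b i) x y); [reflexivity |].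
  rewrite !(pd_plus Om) by assumption. cbn. unfold lap, dx, dy. ring.
Qed.

Lemma dy_dx_comm Om F x y i : open2 Om -> smooth_vec_on 4 Om F -> Om x y -> (i < 4)%nat ->
  dy (dx F) x y i = dx (dy F) x y i.
Proof.
  intros Ho Hs H Hi. symmetry. unfold dx, dy. apply Schwarz.
  - apply (locally_2d_impl Om); [| exact (open2_locally_2d Om x y Ho H)].
    apply locally_2d_forall. intros a b Hab.
    destruct (Hs i Hi nil a b Hab) as [H1 [H2 _]].
    destruct (Hs i Hi (false :: nil) a b Hab) as [H3 _].
    destruct (Hs i Hi (true :: nil) a b Hab) as [_ [H4 _]].
    cbn in *. tauto.
  - apply continuity_2d_pt_filterlim. exact (proj2 (proj2 (Hs i Hi (true :: false :: nil) x y H))).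
  - apply continuity_2d_pt_filterlim. exact (proj2 (proj2 (Hs i Hi (false :: true :: nil) x y H))).
Qed.

Lemma is_derive_Rplus (f g : R -> R) x df dg :
  is_derive f x df -> is_derive g x dg -> is_derive (fun t => f t + g t) x (df + dg).
Proof. exact (is_derive_plus f g x df dg). Qed.

Lemma is_derive_Rminus (f g : R -> R) x df dg :
  is_derive f x df -> is_derive g x dg -> is_derive (fun t => f t - g t) x (df - dg).
Proof. exact (is_derive_minus f g x df dg). Qed.

Lemma is_derive_lor3_expanded (a0 a1 a2 b0 b1 b2 : R -> R) t :
  ex_derive a0 t -> ex_derive a1 t -> ex_derive a2 t ->
  ex_derive b0 t -> ex_derive b1 t -> ex_derive b2 t ->
  is_derive (fun s => - a0 s * b0 s + a1 s * b1 s + a2 s * b2 s) t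
    ((- Derive a0 t * b0 t + Derive a1 t * b1 t + Derive a2 t * b2 t)
     + (- a0 t * Derive b0 t + a1 t * Derive b1 t + a2 t * Derive b2 t)).
Proof.
  intros. auto_derive; [tauto |].
  change (fun s => a0 s) with a0; change (fun s => a1 s) with a1; change (fun s => a2 s) with a2;
  change (fun s => b0 s) with b0; change (fun s => b1 s) with b1; change (fun s => b2 s) with b2.
  ring.
Qed.

Lemma is_derive_lor3 (f g : R -> vec) t :
  (forall i, (i < 3)%nat -> ex_derive (fun s => f s i) t) ->
  (forall i, (i < 3)%nat -> ex_derive (fun s => g s i) t) ->
  is_derive (fun s => lor3 (f s) (g s)) t
    (lor3 (fun i => Derive (fun s => f s i) t) (g t) + lor3 (f t) (fun i => Derive (fun s => g s i) t)).
Proof.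
  intros Hf Hg.
  exact (is_derive_lor3_expanded (fun s => f s 0%nat) (fun s => f s 1%nat) (fun s => f s 2%nat)
    (fun s => g s 0%nat) (fun s => g s 1%nat) (fun s => g s 2%nat) t
    (Hf 0%nat ltac:(lia)) (Hf 1%nat ltac:(lia)) (Hf 2%nat ltac:(lia))
    (Hg 0%nat ltac:(lia)) (Hg 1%nat ltac:(lia)) (Hg 2%nat ltac:(lia))).
Qed.

Lemma is_derive_Rmult (a b : R -> R) t : ex_derive a t -> ex_derive b t ->
  is_derive (fun s => a s * b s) t (Derive a t * b t + a t * Derive b t).
Proof.
  intros. auto_derive; [tauto |].
  change (fun s => a s) with a; change (fun s => b s) with b. ring.
Qed.

Lemma is_derive_lor4 (f g : R -> vec) t :
  (forall i, (i < 4)%nat -> ex_derive (fun s => f s i) t) ->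
  (forall i, (i < 4)%nat -> ex_derive (fun s => g s i) t) ->
  is_derive (fun s => lor4 (f s) (g s)) t
    (lor4 (fun i => Derive (fun s => f s i) t) (g t) + lor4 (f t) (fun i => Derive (fun s => g s i) t)).
Proof.
  intros Hf Hg.
  replace (lor4 (fun i => Derive (fun s => f s i) t) (g t) + lor4 (f t) (fun i => Derive (fun s => g s i) t))
    with ((lor3 (fun i => Derive (fun s => f s i) t) (g t) + lor3 (f t) (fun i => Derive (fun s => g s i) t))
          + (Derive (fun s => f s 3%nat) t * g t 3%nat + f t 3%nat * Derive (fun s => g s 3%nat) t))
    by (unfold lor4; ring).
  apply (is_derive_Rplus (fun s => lor3 (f s) (g s)) (fun s => f s 3%nat * g s 3%nat)).
  - apply is_derive_lor3; intros i Hi; [apply Hf | apply Hg]; lia.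
  - apply is_derive_Rmult; [apply Hf | apply Hg]; lia.
Qed.

Lemma smooth_vec_ex_derive_x n Om F x y i : smooth_vec_on n Om F -> Om x y -> (i < n)%nat ->
  ex_derive (fun t => F t y i) x.
Proof. intros Hs H Hi. exact (proj1 (Hs i Hi nil x y H)). Qed.

Lemma smooth_vec_ex_derive_y n Om F x y i : smooth_vec_on n Om F -> Om x y -> (i < n)%nat ->
  ex_derive (fun t => F x t i) y.
Proof. intros Hs H Hi. exact (proj1 (proj2 (Hs i Hi nil x y H))). Qed.

Section PlaneProductRules.

Variables (Om : R -> R -> Prop) (F G : R -> R -> vec) (x y : R).
Hypotheses (F_smooth : smooth_vec_on 4 Om F) (G_smooth : smooth_vec_on 4 Om G) (Hxy : Om x y).

Lemma is_derive_dx_lor3 :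
  is_derive (fun t => lor3 (F t y) (G t y)) x (lor3 (dx F x y) (G x y) + lor3 (F x y) (dx G x y)).
Proof.
  apply (is_derive_lor3 (fun t => F t y) (fun t => G t y)); intros i Hi;
    [apply (smooth_vec_ex_derive_x 4 Om F) | apply (smooth_vec_ex_derive_x 4 Om G)]; auto; lia.
Qed.

Lemma is_derive_dy_lor3 :
  is_derive (fun t => lor3 (F x t) (G x t)) y (lor3 (dy F x y) (G x y) + lor3 (F x y) (dy G x y)).
Proof.
  apply (is_derive_lor3 (fun t => F x t) (fun t => G x t)); intros i Hi;
    [apply (smooth_vec_ex_derive_y 4 Om F) | apply (smooth_vec_ex_derive_y 4 Om G)]; auto; lia.
Qed.

Lemma is_derive_dx_lor4 :
  is_derive (fun t => lor4 (F t y) (G t y)) x (lor4 (dx F x y) (G x y) + lor4 (F x y) (dx G x y)).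
Proof.
  apply (is_derive_lor4 (fun t => F t y) (fun t => G t y)); intros i Hi;
    [apply (smooth_vec_ex_derive_x 4 Om F) | apply (smooth_vec_ex_derive_x 4 Om G)]; auto.
Qed.

Lemma is_derive_dy_lor4 :
  is_derive (fun t => lor4 (F x t) (G x t)) y (lor4 (dy F x y) (G x y) + lor4 (F x y) (dy G x y)).
Proof.
  apply (is_derive_lor4 (fun t => F x t) (fun t => G x t)); intros i Hi;
    [apply (smooth_vec_ex_derive_y 4 Om F) | apply (smooth_vec_ex_derive_y 4 Om G)]; auto.
Qed.

End PlaneProductRules.

Lemma is_derive_dx_const Om (Phi : R -> R -> R) c x y l : open2 Om -> Om x y ->
  (forall a b, Om a b -> Phi a b = c) -> is_derive (fun t => Phi t y) x l -> l = 0.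
Proof.
  intros Ho H HPhi Hd. rewrite <- (is_derive_unique _ _ _ Hd), (Derive_ext_loc _ (fun _ => c)).
  - apply Derive_const.
  - apply (filter_imp _ _ (fun t Ht => HPhi t y Ht)), (open2_locally_x Om x y Ho H).
Qed.

Lemma is_derive_dy_const Om (Phi : R -> R -> R) c x y l : open2 Om -> Om x y ->
  (forall a b, Om a b -> Phi a b = c) -> is_derive (fun t => Phi x t) y l -> l = 0.
Proof.
  intros Ho H HPhi Hd. rewrite <- (is_derive_unique _ _ _ Hd), (Derive_ext_loc _ (fun _ => c)).
  - apply Derive_const.
  - apply (filter_imp _ _ (fun t Ht => HPhi x t Ht)), (open2_locally_y Om x y Ho H).
Qed.

Lemma Derive2_div (f g : R -> R) t :
  locally t (fun s => ex_derive f s /\ ex_derive g s /\ g s <> 0) ->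
  ex_derive (Derive f) t -> ex_derive (Derive g) t ->
  Derive (fun s => Derive (fun r => f r / g r) s) t
  = (Derive (fun s => Derive f s) t * g t ^ 2 - 2 * g t * Derive f t * Derive g t
     - f t * (g t * Derive (fun s => Derive g s) t - 2 * Derive g t ^ 2)) / g t ^ 3.
Proof.
  intros Hloc Hf' Hg'.
  destruct (locally_singleton _ _ Hloc) as [Hf [Hg Hg0]].
  rewrite (Derive_ext_loc _ (fun s => (Derive f s * g s - f s * Derive g s) / g s ^ 2)).
  - apply is_derive_unique. auto_derive; [repeat split; auto using pow_nonzero |].
    change (fun s => f s) with f; change (fun s => g s) with g.
    field. exact Hg0.
  - apply (filter_imp _ _ (fun s Hs => Derive_div f g s (proj1 Hs) (proj1 (proj2 Hs)) (proj2 (proj2 Hs)))).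
    exact Hloc.
Qed.

Definition dehom (F : R -> R -> vec) : R -> R -> vec := fun x y i => F x y i / F x y 3%nat.

Definition dehom_d (v dv : vec) : vec :=
  fun i => (dv i * v 3%nat - v i * dv 3%nat) / v 3%nat ^ 2.

Definition dehom_lap (v vx vy lv : vec) : vec :=
  fun i => (lv i * v 3%nat ^ 2 - 2 * v 3%nat * (vx i * vx 3%nat + vy i * vy 3%nat)
            - v i * (v 3%nat * lv 3%nat - 2 * (vx 3%nat ^ 2 + vy 3%nat ^ 2))) / v 3%nat ^ 3.

Lemma dehom_d_3 v dv : dehom_d v dv 3%nat = 0.
Proof. unfold dehom_d, Rdiv. ring. Qed.

Section Dehomogenization.

Variables (Om : R -> R -> Prop) (F : R -> R -> vec).
Hypotheses (Om_open : open2 Om) (F_smooth : smooth_vec_on 4 Om F)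
  (F3_neq0 : forall x y, Om x y -> F x y 3%nat <> 0).

Lemma dx_dehom x y i : Om x y -> (i < 4)%nat -> dx (dehom F) x y i = dehom_d (F x y) (dx F x y) i.
Proof.
  intros H Hi. apply Derive_div; auto.
  all: apply (smooth_vec_ex_derive_x 4 Om F); auto; lia.
Qed.

Lemma dy_dehom x y i : Om x y -> (i < 4)%nat -> dy (dehom F) x y i = dehom_d (F x y) (dy F x y) i.
Proof.
  intros H Hi. apply Derive_div; auto.
  all: apply (smooth_vec_ex_derive_y 4 Om F); auto; lia.
Qed.

Lemma lap_dehom x y i : Om x y -> (i < 4)%nat ->
  lap (dehom F) x y i = dehom_lap (F x y) (dx F x y) (dy F x y) (lap F x y) i.
Proof.
  intros H Hi. assert (Hx := smooth_vec_dx 4 Om F F_smooth). assert (Hy := smooth_vec_dy 4 Om F F_smooth).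
  assert (Dxx := Derive2_div (fun s => F s y i) (fun s => F s y 3%nat) x).
  assert (Dyy := Derive2_div (fun s => F x s i) (fun s => F x s 3%nat) y).
  cbv beta in Dxx, Dyy.
  unfold lap, dehom_lap. unfold dx at 1 2, dy at 1 2, dehom. rewrite Dxx, Dyy.
  - unfold dx, dy. field. auto.
  - apply (filter_imp (fun s => Om x s)); [| exact (open2_locally_y Om x y Om_open H)].
    intros s Hs. repeat split; auto; apply (smooth_vec_ex_derive_y 4 Om F); auto; lia.
  - apply (smooth_vec_ex_derive_y 4 Om (dy F)); auto.
  - apply (smooth_vec_ex_derive_y 4 Om (dy F)); auto; lia.
  - apply (filter_imp (fun s => Om s y)); [| exact (open2_locally_x Om x y Om_open H)].
    intros s Hs. repeat split; auto; apply (smooth_vec_ex_derive_x 4 Om F); auto; lia.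
  - apply (smooth_vec_ex_derive_x 4 Om (dx F)); auto.
  - apply (smooth_vec_ex_derive_x 4 Om (dx F)); auto; lia.
Qed.

End Dehomogenization.

Lemma frame_coords_dehom_d X Y E N v dv :
  frame_coords X Y E N (dehom_d v dv)
  = coords_scale (/ v 3%nat ^ 2) (coords_add (coords_scale (v 3%nat) (frame_coords X Y E N dv))
                                             (coords_scale (- dv 3%nat) (frame_coords X Y E N v))).
Proof. unfold frame_coords, coords_scale, coords_add, dehom_d, lor4, lor3, Rdiv; cbn. f_equal; ring. Qed.

Lemma frame_coords_dehom_lap X Y E N v vx vy lv :
  frame_coords X Y E N (dehom_lap v vx vy lv)
  = coords_scale (/ v 3%nat ^ 3)
      (coords_add (coords_scale (v 3%nat ^ 2) (frame_coords X Y E N lv))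
      (coords_add (coords_scale (- 2 * v 3%nat * vx 3%nat) (frame_coords X Y E N vx))
      (coords_add (coords_scale (- 2 * v 3%nat * vy 3%nat) (frame_coords X Y E N vy))
                  (coords_scale (2 * (vx 3%nat ^ 2 + vy 3%nat ^ 2) - v 3%nat * lv 3%nat)
                                (frame_coords X Y E N v))))).
Proof. unfold frame_coords, coords_scale, coords_add, dehom_lap, lor4, lor3, Rdiv; cbn. f_equal; ring. Qed.

(** * Frame coordinates at a point of the surface *)

(* The data of the surface at one point: the conformal factor lam, the angle function u,
   h_x, h_y, lam_x, lam_y, and L = <psi_xx, eta>, M = <psi_xy, eta>. *)
Record jet := Jet { jet_lam : R; jet_u : R; jet_hx : R; jet_hy : R;
                    jet_lamx : R; jet_lamy : R; jet_L : R; jet_M : R }.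

Section JetCoordinates.

Variable j : jet.
Let lam := jet_lam j.
Let u := jet_u j.
Let hx := jet_hx j.
Let hy := jet_hy j.
Let L := jet_L j.
Let M := jet_M j.

(* [jet_v] lists the coordinates of the vector v in the frame (psi_x, psi_y, eta, (N, 0)). *)
Definition jet_e3 := Coords hx hy u 0.
Definition jet_psi_x := Coords lam 0 0 0.
Definition jet_psi_y := Coords 0 lam 0 0.
Definition jet_eta := Coords 0 0 1 0.
(* The last coordinate of the vector with frame coordinates [a], since v 3 = <v, e3>. *)
Definition jet_comp3 (a : coords) := coords_lor4 lam a jet_e3.
Definition jet_psi_xx := Coords (jet_lamx j / 2) (- jet_lamy j / 2) L (hx ^ 2 - lam).
Definition jet_psi_xy := Coords (jet_lamy j / 2) (jet_lamx j / 2) M (hx * hy).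
Definition jet_psi_yy := Coords (- jet_lamx j / 2) (jet_lamy j / 2) (lam - L) (hy ^ 2 - lam).
Definition jet_eta_x := Coords (- L) (- M) 0 (u * hx).
Definition jet_eta_y := Coords (- M) (L - lam) 0 (u * hy).
Definition jet_lap_eta := Coords (u * hx * (hx ^ 2 + hy ^ 2)) (u * hy * (hx ^ 2 + hy ^ 2))
  (u ^ 2 * (hx ^ 2 + hy ^ 2) - (L ^ 2 + 2 * M ^ 2 + (L - lam) ^ 2) / lam)
  (lam + lam * u ^ 2 - 2 * (L * hx ^ 2 + 2 * M * hx * hy + (lam - L) * hy ^ 2) / lam).
Definition jet_nu := Coords 0 0 1 (-1).
Definition jet_nu_x := Coords (lam - L - hx ^ 2) (- M - hx * hy) (- u * hx) (u * hx).
Definition jet_nu_y := Coords (- M - hx * hy) (L - hy ^ 2) (- u * hy) (u * hy).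
Definition jet_lap_nu := coords_add jet_lap_eta
  (Coords (- lam * u * hx) (- lam * u * hy) (lam * (1 - u ^ 2)) (hx ^ 2 + hy ^ 2 - 2 * lam)).

(* Coordinates of (G_x, 0) or (G_y, 0), and of (Delta G, 0), from those of the derivatives of nu. *)
Definition jet_gauss_d (nu_d : coords) :=
  coords_scale (/ u ^ 2) (coords_add (coords_scale u nu_d) (coords_scale (- jet_comp3 nu_d) jet_nu)).

Definition jet_gauss_lap :=
  let ux := jet_comp3 jet_nu_x in let uy := jet_comp3 jet_nu_y in
  coords_scale (/ u ^ 3)
    (coords_add (coords_scale (u ^ 2) jet_lap_nu)
    (coords_add (coords_scale (- 2 * u * ux) jet_nu_x)
    (coords_add (coords_scale (- 2 * u * uy) jet_nu_y)
                (coords_scale (2 * (ux ^ 2 + uy ^ 2) - u * jet_comp3 jet_lap_nu) jet_nu)))).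

Hypotheses (lam_neq0 : lam <> 0) (u_neq0 : u <> 0) (unit_normal : hx ^ 2 + hy ^ 2 = lam * (1 - u ^ 2)).

(* Clear the (nonzero) denominators and check that the numerator lies in the ideal generated
   by [unit_normal]. *)
Ltac polynomial_identity :=
  apply Rminus_diag_uniq; field_simplify; auto;
  unfold Rdiv; apply Rmult_eq_0_compat_r; cbv [pow] in *; nsatz.

Lemma jet_gauss_d_lor4 :
  coords_lor4 lam (jet_gauss_d jet_nu_x) (jet_gauss_d jet_nu_x)
    - coords_lor4 lam (jet_gauss_d jet_nu_y) (jet_gauss_d jet_nu_y) = lam - 2 * L - hx ^ 2 + hy ^ 2 /\
  coords_lor4 lam (jet_gauss_d jet_nu_x) (jet_gauss_d jet_nu_y) = - (M + hx * hy).
Proof.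
  unfold jet_gauss_d, jet_comp3, coords_lor4, jet_nu_x, jet_nu_y, jet_nu, jet_e3, coords_scale,
    coords_add; cbn.
  split; polynomial_identity.
Qed.

Lemma jet_comp3_nu_x : jet_comp3 jet_nu_x = - (L * hx + M * hy) / lam.
Proof.
  unfold jet_comp3, coords_lor4, jet_nu_x, jet_e3; cbn.
  polynomial_identity.
Qed.

Lemma jet_comp3_nu_y : jet_comp3 jet_nu_y = - (M * hx + (lam - L) * hy) / lam.
Proof.
  unfold jet_comp3, coords_lor4, jet_nu_y, jet_e3; cbn.
  polynomial_identity.
Qed.

(* Since jet_nu = (0, 0, 1, -1) and jet_e3 = (hx, hy, u, 0), this says that (Delta G, 0) lies
   in the plane spanned by nu and e3. *)
Lemma jet_gauss_lap_in_plane :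
  cX jet_gauss_lap * u = (cE jet_gauss_lap + cN jet_gauss_lap) * hx /\
  cY jet_gauss_lap * u = (cE jet_gauss_lap + cN jet_gauss_lap) * hy.
Proof.
  unfold jet_gauss_lap. rewrite jet_comp3_nu_x, jet_comp3_nu_y.
  cbn [cX cY cE cN coords_scale coords_add jet_nu jet_nu_x jet_nu_y jet_lap_nu jet_lap_eta].
  rewrite !Rmult_0_r, !Rplus_0_r.
  split; polynomial_identity.
Qed.

End JetCoordinates.

(* nu = eta + (N, 0), so that (G, 1) = nu / u; its last coordinate is u. *)
Definition gauss_lift (psi eta : R -> R -> vec) : R -> R -> vec :=
  fun x y i => match i with 3%nat => eta x y 3%nat | _ => eta x y i + psi x y i end.

Section Surface.

Variables (Om : R -> R -> Prop) (psi eta : R -> R -> vec).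
Hypotheses (Om_open : open2 Om)
  (psi_smooth : smooth_vec_on 4 Om psi) (eta_smooth : smooth_vec_on 4 Om eta)
  (psi_in_H2 : forall x y, Om x y -> lor3 (psi x y) (psi x y) = -1)
  (psi_conformal : forall x y, Om x y -> lor4 (dx psi x y) (dx psi x y) = lor4 (dy psi x y) (dy psi x y))
  (psi_x_psi_y : forall x y, Om x y -> lor4 (dx psi x y) (dy psi x y) = 0)
  (lam_pos : forall x y, Om x y -> 0 < lor4 (dx psi x y) (dx psi x y))
  (eta_psi_x : forall x y, Om x y -> lor4 (eta x y) (dx psi x y) = 0)
  (eta_psi_y : forall x y, Om x y -> lor4 (eta x y) (dy psi x y) = 0)
  (eta_psi : forall x y, Om x y -> lor3 (eta x y) (psi x y) = 0)
  (eta_unit : forall x y, Om x y -> lor4 (eta x y) (eta x y) = 1)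
  (u_pos : forall x y, Om x y -> 0 < eta x y 3%nat)
  (mean_curvature_half : forall x y, Om x y -> meanH psi eta x y = 1 / 2).

Ltac smooth :=
  repeat match goal with
  | |- smooth_vec_on _ _ (dx _) => apply smooth_vec_dx
  | |- smooth_vec_on _ _ (dy _) => apply smooth_vec_dy
  | |- smooth_vec_on _ _ (lap _) => apply smooth_vec_lap; [exact Om_open |]
  end; assumption.

(* Proves the x- or y-derivative of an identity [Phi = c] holding on Om, stated in the shape
   produced by the product rule. *)
Ltac differentiate const_rule lor3_rule lor4_rule identity :=
  let H := fresh in intros ? ? H;
  apply (const_rule Om _ _ _ _ _ Om_open H identity);
  repeat match goal with
  | |- is_derive (fun _ => _ + _) _ _ => apply is_derive_Rplus
  | |- is_derive (fun _ => _ - _) _ _ => apply is_derive_Rminus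
  | |- is_derive (fun _ => lor3 _ _) _ _ => apply (lor3_rule Om)
  | |- is_derive (fun _ => lor4 _ _) _ _ => apply (lor4_rule Om)
  end; try smooth; assumption.

Ltac differentiate_x := differentiate is_derive_dx_const is_derive_dx_lor3 is_derive_dx_lor4.
Ltac differentiate_y := differentiate is_derive_dy_const is_derive_dy_lor3 is_derive_dy_lor4.

Lemma psi_conformal_diff : forall x y, Om x y ->
  lor4 (dx psi x y) (dx psi x y) - lor4 (dy psi x y) (dy psi x y) = 0.
Proof. intros x y H. rewrite (psi_conformal x y H). ring. Qed.

Lemma psi_in_H2_dx : forall x y, Om x y -> lor3 (dx psi x y) (psi x y) + lor3 (psi x y) (dx psi x y) = 0.
Proof. differentiate_x psi_in_H2. Qed.

Lemma psi_in_H2_dy : forall x y, Om x y -> lor3 (dy psi x y) (psi x y) + lor3 (psi x y) (dy psi x y) = 0.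
Proof. differentiate_y psi_in_H2. Qed.

Lemma psi_conformal_dx : forall x y, Om x y ->
  (lor4 (dx (dx psi) x y) (dx psi x y) + lor4 (dx psi x y) (dx (dx psi) x y))
  - (lor4 (dx (dy psi) x y) (dy psi x y) + lor4 (dy psi x y) (dx (dy psi) x y)) = 0.
Proof. differentiate_x psi_conformal_diff. Qed.

Lemma psi_conformal_dy : forall x y, Om x y ->
  (lor4 (dy (dx psi) x y) (dx psi x y) + lor4 (dx psi x y) (dy (dx psi) x y))
  - (lor4 (dy (dy psi) x y) (dy psi x y) + lor4 (dy psi x y) (dy (dy psi) x y)) = 0.
Proof. differentiate_y psi_conformal_diff. Qed.

Lemma psi_x_psi_y_dx : forall x y, Om x y ->
  lor4 (dx (dx psi) x y) (dy psi x y) + lor4 (dx psi x y) (dx (dy psi) x y) = 0.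
Proof. differentiate_x psi_x_psi_y. Qed.

Lemma psi_x_psi_y_dy : forall x y, Om x y ->
  lor4 (dy (dx psi) x y) (dy psi x y) + lor4 (dx psi x y) (dy (dy psi) x y) = 0.
Proof. differentiate_y psi_x_psi_y. Qed.

Lemma eta_psi_x_dx : forall x y, Om x y ->
  lor4 (dx eta x y) (dx psi x y) + lor4 (eta x y) (dx (dx psi) x y) = 0.
Proof. differentiate_x eta_psi_x. Qed.

Lemma eta_psi_x_dy : forall x y, Om x y ->
  lor4 (dy eta x y) (dx psi x y) + lor4 (eta x y) (dy (dx psi) x y) = 0.
Proof. differentiate_y eta_psi_x. Qed.

Lemma eta_psi_y_dx : forall x y, Om x y ->
  lor4 (dx eta x y) (dy psi x y) + lor4 (eta x y) (dx (dy psi) x y) = 0.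
Proof. differentiate_x eta_psi_y. Qed.

Lemma eta_psi_y_dy : forall x y, Om x y ->
  lor4 (dy eta x y) (dy psi x y) + lor4 (eta x y) (dy (dy psi) x y) = 0.
Proof. differentiate_y eta_psi_y. Qed.

Lemma eta_psi_dx : forall x y, Om x y ->
  lor3 (dx eta x y) (psi x y) + lor3 (eta x y) (dx psi x y) = 0.
Proof. differentiate_x eta_psi. Qed.

Lemma eta_psi_dy : forall x y, Om x y ->
  lor3 (dy eta x y) (psi x y) + lor3 (eta x y) (dy psi x y) = 0.
Proof. differentiate_y eta_psi. Qed.

Lemma eta_unit_dx : forall x y, Om x y -> lor4 (dx eta x y) (eta x y) + lor4 (eta x y) (dx eta x y) = 0.
Proof. differentiate_x eta_unit. Qed.

Lemma eta_unit_dy : forall x y, Om x y -> lor4 (dy eta x y) (eta x y) + lor4 (eta x y) (dy eta x y) = 0.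
Proof. differentiate_y eta_unit. Qed.

Lemma psi_xy_comm x y i : Om x y -> (i < 4)%nat -> dx (dy psi) x y i = dy (dx psi) x y i.
Proof. intros H Hi. symmetry. exact (dy_dx_comm Om psi x y i Om_open psi_smooth H Hi). Qed.

Lemma lor4_psi_xy_comm x y w : Om x y -> lor4 w (dx (dy psi) x y) = lor4 w (dy (dx psi) x y).
Proof. intros H. apply lor4_ext; auto. intros i Hi. exact (psi_xy_comm x y i H Hi). Qed.

(* The mixed partial taken in the other order, so that the derivatives of these identities meet
   those of [eta_lap_psi] after one application of Schwarz's theorem. *)
Lemma eta_psi_x_dy_comm : forall x y, Om x y ->
  lor4 (dy eta x y) (dx psi x y) + lor4 (eta x y) (dx (dy psi) x y) = 0.
Proof.
  intros x y H. rewrite <- (eta_psi_x_dy x y H), lor4_psi_xy_comm; auto.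
Qed.

Lemma eta_psi_y_dx_comm : forall x y, Om x y ->
  lor4 (dx eta x y) (dy psi x y) + lor4 (eta x y) (dy (dx psi) x y) = 0.
Proof.
  intros x y H. rewrite <- (eta_psi_y_dx x y H), lor4_psi_xy_comm; auto.
Qed.

Lemma eta_lap_psi : forall x y, Om x y ->
  lor4 (lap psi x y) (eta x y) - lor4 (dx psi x y) (dx psi x y) = 0.
Proof.
  intros x y H. assert (Hm := mean_curvature_half x y H). assert (Hl := lam_pos x y H).
  unfold meanH, lam in Hm. apply Rminus_diag_eq.
  apply (Rmult_eq_reg_r (/ (2 * lor4 (dx psi x y) (dx psi x y)))).
  - rewrite <- Rdiv_def, Hm. field. lra.
  - apply Rinv_neq_0_compat. lra.
Qed.

Lemma psi_in_H2_dxx : forall x y, Om x y ->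
  (lor3 (dx (dx psi) x y) (psi x y) + lor3 (dx psi x y) (dx psi x y))
  + (lor3 (dx psi x y) (dx psi x y) + lor3 (psi x y) (dx (dx psi) x y)) = 0.
Proof. differentiate_x psi_in_H2_dx. Qed.

Lemma psi_in_H2_dxy : forall x y, Om x y ->
  (lor3 (dy (dx psi) x y) (psi x y) + lor3 (dx psi x y) (dy psi x y))
  + (lor3 (dy psi x y) (dx psi x y) + lor3 (psi x y) (dy (dx psi) x y)) = 0.
Proof. differentiate_y psi_in_H2_dx. Qed.

Lemma psi_in_H2_dyy : forall x y, Om x y ->
  (lor3 (dy (dy psi) x y) (psi x y) + lor3 (dy psi x y) (dy psi x y))
  + (lor3 (dy psi x y) (dy psi x y) + lor3 (psi x y) (dy (dy psi) x y)) = 0.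
Proof. differentiate_y psi_in_H2_dy. Qed.

Lemma eta_unit_dxx : forall x y, Om x y ->
  (lor4 (dx (dx eta) x y) (eta x y) + lor4 (dx eta x y) (dx eta x y))
  + (lor4 (dx eta x y) (dx eta x y) + lor4 (eta x y) (dx (dx eta) x y)) = 0.
Proof. differentiate_x eta_unit_dx. Qed.

Lemma eta_unit_dyy : forall x y, Om x y ->
  (lor4 (dy (dy eta) x y) (eta x y) + lor4 (dy eta x y) (dy eta x y))
  + (lor4 (dy eta x y) (dy eta x y) + lor4 (eta x y) (dy (dy eta) x y)) = 0.
Proof. differentiate_y eta_unit_dy. Qed.

Lemma eta_psi_dxx : forall x y, Om x y ->
  (lor3 (dx (dx eta) x y) (psi x y) + lor3 (dx eta x y) (dx psi x y))
  + (lor3 (dx eta x y) (dx psi x y) + lor3 (eta x y) (dx (dx psi) x y)) = 0.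
Proof. differentiate_x eta_psi_dx. Qed.

Lemma eta_psi_dyy : forall x y, Om x y ->
  (lor3 (dy (dy eta) x y) (psi x y) + lor3 (dy eta x y) (dy psi x y))
  + (lor3 (dy eta x y) (dy psi x y) + lor3 (eta x y) (dy (dy psi) x y)) = 0.
Proof. differentiate_y eta_psi_dy. Qed.

Lemma eta_psi_x_dxx : forall x y, Om x y ->
  (lor4 (dx (dx eta) x y) (dx psi x y) + lor4 (dx eta x y) (dx (dx psi) x y))
  + (lor4 (dx eta x y) (dx (dx psi) x y) + lor4 (eta x y) (dx (dx (dx psi)) x y)) = 0.
Proof. differentiate_x eta_psi_x_dx. Qed.

Lemma eta_psi_x_dyy : forall x y, Om x y ->
  (lor4 (dy (dy eta) x y) (dx psi x y) + lor4 (dy eta x y) (dy (dx psi) x y))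
  + (lor4 (dy eta x y) (dx (dy psi) x y) + lor4 (eta x y) (dy (dx (dy psi)) x y)) = 0.
Proof. differentiate_y eta_psi_x_dy_comm. Qed.

Lemma eta_psi_y_dxx : forall x y, Om x y ->
  (lor4 (dx (dx eta) x y) (dy psi x y) + lor4 (dx eta x y) (dx (dy psi) x y))
  + (lor4 (dx eta x y) (dy (dx psi) x y) + lor4 (eta x y) (dx (dy (dx psi)) x y)) = 0.
Proof. differentiate_x eta_psi_y_dx_comm. Qed.

Lemma eta_psi_y_dyy : forall x y, Om x y ->
  (lor4 (dy (dy eta) x y) (dy psi x y) + lor4 (dy eta x y) (dy (dy psi) x y))
  + (lor4 (dy eta x y) (dy (dy psi) x y) + lor4 (eta x y) (dy (dy (dy psi)) x y)) = 0.
Proof. differentiate_y eta_psi_y_dy. Qed.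

Lemma eta_lap_psi_dx : forall x y, Om x y ->
  (lor4 (dx (lap psi) x y) (eta x y) + lor4 (lap psi x y) (dx eta x y))
  - (lor4 (dx (dx psi) x y) (dx psi x y) + lor4 (dx psi x y) (dx (dx psi) x y)) = 0.
Proof. differentiate_x eta_lap_psi. Qed.

Lemma eta_lap_psi_dy : forall x y, Om x y ->
  (lor4 (dy (lap psi) x y) (eta x y) + lor4 (lap psi x y) (dy eta x y))
  - (lor4 (dy (dx psi) x y) (dx psi x y) + lor4 (dx psi x y) (dy (dx psi) x y)) = 0.
Proof. differentiate_y eta_lap_psi. Qed.

Local Notation frame_at x y := (frame_coords (dx psi x y) (dy psi x y) (eta x y) (hat (psi x y))).

Definition jet_at x y : jet :=
  Jet (lor4 (dx psi x y) (dx psi x y)) (eta x y 3%nat) (dx psi x y 3%nat) (dy psi x y 3%nat)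
      (2 * lor4 (dx (dx psi) x y) (dx psi x y)) (2 * lor4 (dy (dx psi) x y) (dx psi x y))
      (lor4 (dx (dx psi) x y) (eta x y)) (lor4 (dy (dx psi) x y) (eta x y)).

Lemma psi_x_tangent x y : Om x y -> lor3 (dx psi x y) (psi x y) = 0.
Proof. intros H. assert (R := psi_in_H2_dx x y H). rewrite (lor3_sym (psi x y)) in R. lra. Qed.

Lemma psi_y_tangent x y : Om x y -> lor3 (dy psi x y) (psi x y) = 0.
Proof. intros H. assert (R := psi_in_H2_dy x y H). rewrite (lor3_sym (psi x y)) in R. lra. Qed.

Ltac orthogonal_frame_at H :=
  first [ pose proof (lam_pos _ _ H); cbn; lra
        | reflexivity
        | symmetry; exact (psi_conformal _ _ H)
        | exact (eta_unit _ _ H)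
        | rewrite lor4_hat, lor3_hat_r; exact (psi_in_H2 _ _ H)
        | exact (psi_x_psi_y _ _ H)
        | rewrite lor4_sym; first [exact (eta_psi_x _ _ H) | exact (eta_psi_y _ _ H)]
        | rewrite lor4_hat_r;
          first [exact (psi_x_tangent _ _ H) | exact (psi_y_tangent _ _ H) | exact (eta_psi _ _ H)] ].

Lemma lor4_at x y v w : Om x y ->
  lor4 v w = coords_lor4 (jet_lam (jet_at x y)) (frame_at x y v) (frame_at x y w).
Proof. intros H. apply lor4_frame; orthogonal_frame_at H. Qed.

Lemma frame_at_inj x y v w : Om x y -> frame_at x y v = frame_at x y w ->
  forall i, (i < 4)%nat -> v i = w i.
Proof. intros H. apply (frame_coords_inj _ _ _ _ (jet_lam (jet_at x y))); orthogonal_frame_at H. Qed.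

Lemma frame_at_e3 x y : frame_at x y e3 = jet_e3 (jet_at x y).
Proof.
  unfold frame_coords, jet_e3. rewrite !lor4_e3. reflexivity.
Qed.

Lemma comp3_at x y v : Om x y -> v 3%nat = jet_comp3 (jet_at x y) (frame_at x y v).
Proof.
  intros H. unfold jet_comp3. rewrite <- frame_at_e3, <- (lor4_at x y v e3 H), lor4_sym.
  exact (eq_sym (lor4_e3 v)).
Qed.

Lemma jet_at_unit_normal x y : Om x y ->
  jet_hx (jet_at x y) ^ 2 + jet_hy (jet_at x y) ^ 2
  = jet_lam (jet_at x y) * (1 - jet_u (jet_at x y) ^ 2).
Proof.
  intros H. assert (E := lor4_at x y e3 e3 H). rewrite frame_at_e3, lor4_e3 in E.
  assert (Hl := lam_pos x y H). unfold coords_lor4 in E. cbn in E |- *.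
  set (l := lor4 (dx psi x y) (dx psi x y)) in *.
  apply (Rmult_eq_reg_r (/ l)); [| apply Rinv_neq_0_compat; lra].
  rewrite (Rmult_comm l), Rmult_assoc, Rinv_r, Rmult_1_r by lra.
  unfold Rdiv in E. lra.
Qed.

Lemma frame_at_psi_xx x y : Om x y -> frame_at x y (dx (dx psi) x y) = jet_psi_xx (jet_at x y).
Proof.
  intros H. unfold frame_coords, jet_psi_xx; cbn. rewrite lor4_hat_r. f_equal.
  - field.
  - assert (R := psi_x_psi_y_dx x y H).
    rewrite lor4_psi_xy_comm, (lor4_sym (dx psi x y)) in R by exact H. lra.
  - assert (R := psi_in_H2_dxx x y H). rewrite (lor3_sym (psi x y)), (lor3_lor4 (dx psi x y)) in R. lra.
Qed.

Lemma frame_at_psi_xy x y : Om x y -> frame_at x y (dy (dx psi) x y) = jet_psi_xy (jet_at x y).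
Proof.
  intros H. unfold frame_coords, jet_psi_xy; cbn. rewrite lor4_hat_r. f_equal.
  - field.
  - assert (R := psi_conformal_dx x y H).
    rewrite (lor4_sym (dx (dy psi) x y)), !lor4_psi_xy_comm, (lor4_sym (dx psi x y)),
      (lor4_sym (dy psi x y)) in R by exact H.
    lra.
  - assert (R := psi_in_H2_dxy x y H). assert (O := psi_x_psi_y x y H).
    rewrite (lor3_sym (psi x y)), (lor3_sym (dy psi x y)), (lor3_lor4 (dx psi x y)) in R. lra.
Qed.

Lemma frame_at_psi_yy x y : Om x y -> frame_at x y (dy (dy psi) x y) = jet_psi_yy (jet_at x y).
Proof.
  intros H. unfold frame_coords, jet_psi_yy; cbn. rewrite lor4_hat_r.
  assert (conf := psi_conformal x y H).
  assert (Rx := psi_conformal_dx x y H). assert (Ry := psi_conformal_dy x y H).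
  rewrite (lor4_sym (dx (dy psi) x y)), !lor4_psi_xy_comm, (lor4_sym (dx psi x y)),
    (lor4_sym (dy psi x y)) in Rx by exact H.
  rewrite (lor4_sym (dx psi x y)), (lor4_sym (dy psi x y)) in Ry.
  f_equal.
  - assert (R := psi_x_psi_y_dy x y H). rewrite (lor4_sym (dx psi x y)) in R. lra.
  - lra.
  - assert (R := eta_lap_psi x y H). rewrite lor4_lap in R. lra.
  - assert (R := psi_in_H2_dyy x y H).
    rewrite (lor3_sym (psi x y)), (lor3_lor4 (dy psi x y)) in R. lra.
Qed.

Lemma frame_at_eta_x x y : Om x y -> frame_at x y (dx eta x y) = jet_eta_x (jet_at x y).
Proof.
  intros H. unfold frame_coords, jet_eta_x; cbn. rewrite lor4_hat_r. f_equal.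
  - assert (R := eta_psi_x_dx x y H). rewrite (lor4_sym (eta x y)) in R. lra.
  - assert (R := eta_psi_y_dx_comm x y H). rewrite (lor4_sym (eta x y)) in R. lra.
  - assert (R := eta_unit_dx x y H). rewrite (lor4_sym (eta x y)) in R. lra.
  - assert (R := eta_psi_dx x y H). assert (O := eta_psi_x x y H).
    rewrite (lor3_lor4 (eta x y)) in R. lra.
Qed.

Lemma frame_at_eta_y x y : Om x y -> frame_at x y (dy eta x y) = jet_eta_y (jet_at x y).
Proof.
  intros H. unfold frame_coords, jet_eta_y; cbn. rewrite lor4_hat_r. f_equal.
  - assert (R := eta_psi_x_dy x y H). rewrite (lor4_sym (eta x y)) in R. lra.
  - assert (R := eta_psi_y_dy x y H). assert (C := eta_lap_psi x y H).
    rewrite lor4_lap in C. rewrite (lor4_sym (eta x y)) in R. lra.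
  - assert (R := eta_unit_dy x y H). rewrite (lor4_sym (eta x y)) in R. lra.
  - assert (R := eta_psi_dy x y H). assert (O := eta_psi_y x y H).
    rewrite (lor3_lor4 (eta x y)) in R. lra.
Qed.

(* Codazzi-type equations: the constancy of H enters here, through [eta_lap_psi_dx]. *)
Lemma lap_eta_psi_x x y : Om x y ->
  lor4 (lap eta x y) (dx psi x y)
  = - 2 * lor4 (dx eta x y) (dx (dx psi) x y) - 2 * lor4 (dy eta x y) (dy (dx psi) x y)
    - 2 * lor4 (dx (dx psi) x y) (dx psi x y) + lor4 (lap psi x y) (dx eta x y).
Proof.
  intros H.
  assert (Rxx := eta_psi_x_dxx x y H). assert (Ryy := eta_psi_x_dyy x y H).
  assert (Rlap := eta_lap_psi_dx x y H).
  assert (dx_lap_psi : lor4 (dx (lap psi) x y) (eta x y)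
    = lor4 (dx (dx (dx psi)) x y) (eta x y) + lor4 (dy (dx (dy psi)) x y) (eta x y)).
  { rewrite <- lor4_vadd. apply lor4_ext; auto. intros i Hi. unfold vadd.
    rewrite (dx_lap 4 Om psi x y i Om_open psi_smooth H Hi).
    f_equal. symmetry. apply (dy_dx_comm Om (dy psi)); auto. smooth. }
  rewrite dx_lap_psi, (lor4_sym (dx psi x y)) in Rlap.
  rewrite lor4_psi_xy_comm, (lor4_sym (eta x y)) in Ryy by exact H.
  rewrite (lor4_sym (eta x y)) in Rxx.
  rewrite lor4_lap. lra.
Qed.

Lemma lap_eta_psi_y x y : Om x y ->
  lor4 (lap eta x y) (dy psi x y)
  = - 2 * lor4 (dx eta x y) (dy (dx psi) x y) - 2 * lor4 (dy eta x y) (dy (dy psi) x y)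
    - 2 * lor4 (dy (dx psi) x y) (dx psi x y) + lor4 (lap psi x y) (dy eta x y).
Proof.
  intros H.
  assert (Rxx := eta_psi_y_dxx x y H). assert (Ryy := eta_psi_y_dyy x y H).
  assert (Rlap := eta_lap_psi_dy x y H).
  assert (dy_lap_psi : lor4 (dy (lap psi) x y) (eta x y)
    = lor4 (dx (dy (dx psi)) x y) (eta x y) + lor4 (dy (dy (dy psi)) x y) (eta x y)).
  { rewrite <- lor4_vadd. apply lor4_ext; auto. intros i Hi. unfold vadd.
    rewrite (dy_lap 4 Om psi x y i Om_open psi_smooth H Hi).
    f_equal. apply (dy_dx_comm Om (dx psi)); auto. smooth. }
  rewrite dy_lap_psi, (lor4_sym (dx psi x y)) in Rlap.
  rewrite lor4_psi_xy_comm, (lor4_sym (eta x y)) in Rxx by exact H.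
  rewrite (lor4_sym (eta x y)) in Ryy.
  rewrite lor4_lap. lra.
Qed.

Lemma lap_eta_eta x y : Om x y ->
  lor4 (lap eta x y) (eta x y) = - (lor4 (dx eta x y) (dx eta x y) + lor4 (dy eta x y) (dy eta x y)).
Proof.
  intros H. assert (Rxx := eta_unit_dxx x y H). assert (Ryy := eta_unit_dyy x y H).
  rewrite (lor4_sym (eta x y)) in Rxx, Ryy. rewrite lor4_lap. lra.
Qed.

Lemma lap_eta_psi x y : Om x y ->
  lor3 (lap eta x y) (psi x y)
  = - 2 * lor3 (dx eta x y) (dx psi x y) - 2 * lor3 (dy eta x y) (dy psi x y) - lor3 (eta x y) (lap psi x y).
Proof.
  intros H. assert (Rxx := eta_psi_dxx x y H). assert (Ryy := eta_psi_dyy x y H).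
  rewrite lor3_lap, (lor3_sym (eta x y)), lor3_lap, !(lor3_sym _ (eta x y)). lra.
Qed.

Lemma lor3_at x y v w : Om x y ->
  lor3 v w = coords_lor4 (jet_lam (jet_at x y)) (frame_at x y v) (frame_at x y w)
             - jet_comp3 (jet_at x y) (frame_at x y v) * jet_comp3 (jet_at x y) (frame_at x y w).
Proof. intros H. rewrite lor3_lor4, <- !comp3_at, <- lor4_at; auto. Qed.

Lemma frame_at_psi_x x y : Om x y -> frame_at x y (dx psi x y) = jet_psi_x (jet_at x y).
Proof.
  intros H. unfold frame_coords, jet_psi_x; cbn.
  rewrite lor4_hat_r, psi_x_tangent, psi_x_psi_y, (lor4_sym _ (eta x y)), eta_psi_x; auto.
Qed.

Lemma frame_at_psi_y x y : Om x y -> frame_at x y (dy psi x y) = jet_psi_y (jet_at x y).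
Proof.
  intros H. unfold frame_coords, jet_psi_y; cbn.
  rewrite lor4_hat_r, psi_y_tangent, (lor4_sym _ (dx psi x y)), psi_x_psi_y, (lor4_sym _ (eta x y)),
    eta_psi_y, <- psi_conformal; auto.
Qed.

Lemma frame_at_eta x y : Om x y -> frame_at x y (eta x y) = jet_eta.
Proof.
  intros H. unfold frame_coords, jet_eta.
  rewrite lor4_hat_r, eta_psi_x, eta_psi_y, eta_psi, eta_unit; auto.
Qed.

Lemma frame_at_lap_psi x y : Om x y ->
  frame_at x y (lap psi x y) = coords_add (jet_psi_xx (jet_at x y)) (jet_psi_yy (jet_at x y)).
Proof.
  intros H. rewrite <- frame_at_psi_xx, <- frame_at_psi_yy by exact H.
  exact (frame_coords_vadd _ _ _ _ (dx (dx psi) x y) (dy (dy psi) x y)).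
Qed.

Lemma frame_at_lap_eta x y : Om x y -> frame_at x y (lap eta x y) = jet_lap_eta (jet_at x y).
Proof.
  intros H. assert (Hl := lam_pos x y H).
  unfold frame_coords at 1. rewrite lor4_hat_r.
  rewrite lap_eta_psi_x, lap_eta_psi_y, lap_eta_eta, lap_eta_psi by exact H.
  rewrite !(lor4_at x y _ _ H), !(lor3_at x y _ _ H).
  rewrite frame_at_psi_x, frame_at_psi_y, frame_at_eta, frame_at_psi_xx, frame_at_psi_xy,
    frame_at_psi_yy, frame_at_eta_x, frame_at_eta_y, frame_at_lap_psi by exact H.
  unfold jet_lap_eta, jet_comp3, coords_lor4, coords_add, jet_psi_x, jet_psi_y, jet_eta, jet_e3,
    jet_psi_xx, jet_psi_xy, jet_psi_yy, jet_eta_x, jet_eta_y; cbn.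
  f_equal; field; lra.
Qed.

Lemma gauss_lift_smooth : smooth_vec_on 4 Om (gauss_lift psi eta).
Proof.
  intros i Hi. destruct i as [|[|[|[|i]]]]; try lia.
  1-3: apply (smooth_on_plus Om (fun a b => eta a b _) (fun a b => psi a b _) Om_open);
       [apply eta_smooth | apply psi_smooth]; lia.
  apply eta_smooth; lia.
Qed.

Lemma gauss_lift_vadd x y i : gauss_lift psi eta x y i = vadd (eta x y) (hat (psi x y)) i.
Proof. unfold vadd, hat. destruct i as [|[|[|[|i]]]]; cbn; ring. Qed.

Lemma dx_gauss_lift x y i : Om x y -> (i < 4)%nat ->
  dx (gauss_lift psi eta) x y i = vadd (dx eta x y) (hat (dx psi x y)) i.
Proof.
  intros H Hi. destruct i as [|[|[|[|i]]]]; try lia.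
  1-3: apply (pd_plus Om (fun a b => eta a b _) (fun a b => psi a b _) (true :: nil) x y Om_open);
       [apply eta_smooth | apply psi_smooth | exact H]; lia.
  unfold vadd. cbn [hat]. rewrite Rplus_0_r. reflexivity.
Qed.

Lemma dy_gauss_lift x y i : Om x y -> (i < 4)%nat ->
  dy (gauss_lift psi eta) x y i = vadd (dy eta x y) (hat (dy psi x y)) i.
Proof.
  intros H Hi. destruct i as [|[|[|[|i]]]]; try lia.
  1-3: apply (pd_plus Om (fun a b => eta a b _) (fun a b => psi a b _) (false :: nil) x y Om_open);
       [apply eta_smooth | apply psi_smooth | exact H]; lia.
  unfold vadd. cbn [hat]. rewrite Rplus_0_r. reflexivity.
Qed.

Lemma lap_gauss_lift x y i : Om x y -> (i < 4)%nat ->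
  lap (gauss_lift psi eta) x y i = vadd (lap eta x y) (hat (lap psi x y)) i.
Proof.
  intros H Hi. destruct (Nat.eq_dec i 3) as [->|Hi3].
  - unfold vadd. cbn [hat]. rewrite Rplus_0_r. reflexivity.
  - rewrite (lap_ext_coord _ (fun a b => vadd (eta a b) (psi a b)) x y i).
    + rewrite (lap_vadd_coord Om eta psi x y i Om_open (eta_smooth i Hi) (psi_smooth i Hi) H).
      unfold vadd, hat. destruct i as [|[|[|[|i]]]]; auto; lia.
    + intros a b. unfold vadd. destruct i as [|[|[|[|i]]]]; auto; lia.
Qed.

Lemma frame_at_nu x y : Om x y -> frame_at x y (gauss_lift psi eta x y) = jet_nu.
Proof.
  intros H.
  rewrite (frame_coords_ext _ _ _ _ _ _ (fun i _ => gauss_lift_vadd x y i)), frame_coords_vadd,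
    frame_at_eta by exact H.
  unfold frame_coords, jet_nu, jet_eta, coords_add; cbn.
  rewrite !lor4_hat, lor3_hat_r, !(lor3_sym (psi x y)), psi_x_tangent, psi_y_tangent, eta_psi,
    psi_in_H2 by exact H.
  f_equal; ring.
Qed.

Lemma frame_at_nu_x x y : Om x y -> frame_at x y (dx (gauss_lift psi eta) x y) = jet_nu_x (jet_at x y).
Proof.
  intros H. rewrite (frame_coords_ext _ _ _ _ _ _ (fun i Hi => dx_gauss_lift x y i H Hi)), frame_coords_vadd,
    frame_coords_hat, frame_at_e3, frame_at_eta_x, frame_at_psi_x by exact H.
  unfold jet_nu_x, jet_eta_x, jet_psi_x, jet_e3, coords_add, coords_scale; cbn. f_equal; ring.
Qed.

Lemma frame_at_nu_y x y : Om x y -> frame_at x y (dy (gauss_lift psi eta) x y) = jet_nu_y (jet_at x y).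
Proof.
  intros H. rewrite (frame_coords_ext _ _ _ _ _ _ (fun i Hi => dy_gauss_lift x y i H Hi)), frame_coords_vadd,
    frame_coords_hat, frame_at_e3, frame_at_eta_y, frame_at_psi_y by exact H.
  unfold jet_nu_y, jet_eta_y, jet_psi_y, jet_e3, coords_add, coords_scale; cbn. f_equal; ring.
Qed.

Lemma frame_at_lap_nu x y : Om x y -> frame_at x y (lap (gauss_lift psi eta) x y) = jet_lap_nu (jet_at x y).
Proof.
  intros H. assert (Hl := lam_pos x y H).
  rewrite (frame_coords_ext _ _ _ _ _ _ (fun i Hi => lap_gauss_lift x y i H Hi)), frame_coords_vadd,
    frame_coords_hat, frame_at_e3, (comp3_at x y (lap psi x y) H), frame_at_lap_eta, frame_at_lap_psi
    by exact H.
  unfold jet_lap_nu, jet_comp3, coords_lor4, jet_psi_xx, jet_psi_yy, jet_e3, coords_add, coords_scale; cbn.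
  f_equal; field; lra.
Qed.

Lemma hypGauss_dehom x y i : (i < 3)%nat -> hypGauss psi eta x y i = dehom (gauss_lift psi eta) x y i.
Proof. intros Hi. destruct i as [|[|[|i]]]; [reflexivity.. | lia]. Qed.

Lemma gauss_lift_3_neq0 x y : Om x y -> gauss_lift psi eta x y 3%nat <> 0.
Proof. intros H. pose proof (u_pos x y H). cbn. lra. Qed.

Lemma gauss_map_in_H2 x y : Om x y -> lor3 (hypGauss psi eta x y) (hypGauss psi eta x y) = -1.
Proof.
  intros H. assert (Hu := gauss_lift_3_neq0 x y H).
  set (nu := gauss_lift psi eta x y) in Hu.
  assert (nu_null : lor4 nu nu = 0).
  { rewrite (lor4_at x y nu nu H), frame_at_nu by exact H. unfold coords_lor4, jet_nu, Rdiv; cbn. ring. }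
  rewrite (lor3_ext _ (dehom (gauss_lift psi eta) x y) _ (dehom (gauss_lift psi eta) x y))
    by (intros; apply hypGauss_dehom; auto).
  replace (lor3 (dehom (gauss_lift psi eta) x y) (dehom (gauss_lift psi eta) x y))
    with ((lor4 nu nu - nu 3%nat * nu 3%nat) / nu 3%nat ^ 2)
    by (unfold dehom, lor4, lor3; fold nu; field; exact Hu).
  rewrite nu_null. field. exact Hu.
Qed.

Lemma frame_at_gauss_d_x x y : Om x y ->
  frame_at x y (dehom_d (gauss_lift psi eta x y) (dx (gauss_lift psi eta) x y))
  = jet_gauss_d (jet_at x y) (jet_nu_x (jet_at x y)).
Proof.
  intros H. rewrite frame_coords_dehom_d.
  rewrite (comp3_at x y (dx (gauss_lift psi eta) x y) H), frame_at_nu_x, frame_at_nu by exact H.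
  reflexivity.
Qed.

Lemma frame_at_gauss_d_y x y : Om x y ->
  frame_at x y (dehom_d (gauss_lift psi eta x y) (dy (gauss_lift psi eta) x y))
  = jet_gauss_d (jet_at x y) (jet_nu_y (jet_at x y)).
Proof.
  intros H. rewrite frame_coords_dehom_d.
  rewrite (comp3_at x y (dy (gauss_lift psi eta) x y) H), frame_at_nu_y, frame_at_nu by exact H.
  reflexivity.
Qed.

Lemma frame_at_gauss_lap x y : Om x y ->
  frame_at x y (dehom_lap (gauss_lift psi eta x y) (dx (gauss_lift psi eta) x y)
                  (dy (gauss_lift psi eta) x y) (lap (gauss_lift psi eta) x y))
  = jet_gauss_lap (jet_at x y).
Proof.
  intros H. rewrite frame_coords_dehom_lap.
  rewrite (comp3_at x y (dx (gauss_lift psi eta) x y) H), (comp3_at x y (dy (gauss_lift psi eta) x y) H),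
    (comp3_at x y (lap (gauss_lift psi eta) x y) H), frame_at_nu_x, frame_at_nu_y, frame_at_lap_nu,
    frame_at_nu by exact H.
  reflexivity.
Qed.

Lemma dx_hypGauss x y i : Om x y -> (i < 3)%nat ->
  dx (hypGauss psi eta) x y i = dehom_d (gauss_lift psi eta x y) (dx (gauss_lift psi eta) x y) i.
Proof.
  intros H Hi. transitivity (dx (dehom (gauss_lift psi eta)) x y i).
  - unfold dx. apply Derive_ext. intros t. apply hypGauss_dehom. exact Hi.
  - apply (dx_dehom Om); auto using gauss_lift_smooth, gauss_lift_3_neq0; lia.
Qed.

Lemma dy_hypGauss x y i : Om x y -> (i < 3)%nat ->
  dy (hypGauss psi eta) x y i = dehom_d (gauss_lift psi eta x y) (dy (gauss_lift psi eta) x y) i.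
Proof.
  intros H Hi. transitivity (dy (dehom (gauss_lift psi eta)) x y i).
  - unfold dy. apply Derive_ext. intros t. apply hypGauss_dehom. exact Hi.
  - apply (dy_dehom Om); auto using gauss_lift_smooth, gauss_lift_3_neq0; lia.
Qed.

Lemma lap_hypGauss x y i : Om x y -> (i < 3)%nat ->
  lap (hypGauss psi eta) x y i
  = dehom_lap (gauss_lift psi eta x y) (dx (gauss_lift psi eta) x y) (dy (gauss_lift psi eta) x y)
      (lap (gauss_lift psi eta) x y) i.
Proof.
  intros H Hi. rewrite (lap_ext_coord _ (dehom (gauss_lift psi eta)) x y i)
    by (intros; apply hypGauss_dehom; exact Hi).
  apply (lap_dehom Om); auto using gauss_lift_smooth, gauss_lift_3_neq0; lia.
Qed.

Lemma gauss_map_harmonic x y : Om x y -> forall i, (i < 3)%nat ->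
  lap (hypGauss psi eta) x y i + lor3 (lap (hypGauss psi eta) x y) (hypGauss psi eta x y)
                                  * hypGauss psi eta x y i = 0.
Proof.
  intros H.
  set (nu := gauss_lift psi eta).
  set (j := jet_at x y).
  set (W := dehom_lap (nu x y) (dx nu x y) (dy nu x y) (lap nu x y)).
  assert (Hl : jet_lam j <> 0) by (pose proof (lam_pos x y H); cbn; lra).
  assert (Hu : jet_u j <> 0) by (pose proof (u_pos x y H); cbn; lra).
  destruct (jet_gauss_lap_in_plane j Hl Hu (jet_at_unit_normal x y H)) as [in_X in_Y].
  set (g := jet_gauss_lap j) in in_X, in_Y.
  assert (W_in_plane : forall i, (i < 4)%nat ->
    W i = vadd (vscale (- cN g) (nu x y)) (vscale ((cE g + cN g) / jet_u j) e3) i).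
  { apply (frame_at_inj x y); auto.
    rewrite frame_at_gauss_lap, frame_coords_vadd, !frame_coords_vscale, frame_at_nu, frame_at_e3 by exact H.
    fold j g. clearbody j g. destruct g as [cx cy ce cn]; cbn in in_X, in_Y |- *.
    unfold coords_add, coords_scale, jet_nu, jet_e3; cbn. f_equal.
    - apply (Rmult_eq_reg_r (jet_u j)); [rewrite in_X; field | ]; exact Hu.
    - apply (Rmult_eq_reg_r (jet_u j)); [rewrite in_Y; field | ]; exact Hu.
    - field. exact Hu.
    - ring. }
  apply (tension_eq0_of_parallel _ _ (- cN g * jet_u j)); [exact (gauss_map_in_H2 x y H) |].
  intros i Hi. rewrite lap_hypGauss, W_in_plane, hypGauss_dehom by (exact H || lia).
  unfold vadd, vscale, dehom. fold nu. change (nu x y 3%nat) with (jet_u j).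
  replace (e3 i) with 0 by (destruct i as [|[|[|i]]]; [reflexivity.. | lia]).
  field. exact Hu.
Qed.

Lemma lor3_at_horizontal x y v w : Om x y -> v 3%nat = 0 ->
  lor3 v w = coords_lor4 (jet_lam (jet_at x y)) (frame_at x y v) (frame_at x y w).
Proof. intros H Hv. rewrite lor3_lor4, Hv, Rmult_0_l, Rminus_0_r. exact (lor4_at x y v w H). Qed.

Lemma gauss_map_hopf x y : Om x y ->
  lor3C (dz (hypGauss psi eta) x y) (dz (hypGauss psi eta) x y) = (- abreschQ psi eta x y)%C.
Proof.
  intros H.
  set (j := jet_at x y).
  assert (Hl : jet_lam j <> 0) by (pose proof (lam_pos x y H); cbn; lra).
  assert (Hu : jet_u j <> 0) by (pose proof (u_pos x y H); cbn; lra).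
  destruct (jet_gauss_d_lor4 j Hl Hu (jet_at_unit_normal x y H)) as [Gxx_Gyy Gxy].
  assert (dx_G := fun i => dx_hypGauss x y i H). assert (dy_G := fun i => dy_hypGauss x y i H).
  rewrite lor3C_dz, (lor3_sym (dy (hypGauss psi eta) x y) (dx (hypGauss psi eta) x y)),
    (lor3_ext _ _ _ _ dx_G dx_G), (lor3_ext _ _ _ _ dy_G dy_G), (lor3_ext _ _ _ _ dx_G dy_G),
    !(lor3_at_horizontal x y) by (exact H || apply dehom_d_3).
  rewrite frame_at_gauss_d_x, frame_at_gauss_d_y by exact H. fold j.
  unfold abreschQ, hopf. rewrite mean_curvature_half, lor4C_dz by exact H.
  rewrite !(lor4_at x y _ _ H), frame_at_psi_x, frame_at_psi_y, frame_at_eta_x, frame_at_eta_y by exact H.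
  fold j. unfold dz.
  set (A := coords_lor4 (jet_lam j) (jet_gauss_d j (jet_nu_x j)) (jet_gauss_d j (jet_nu_x j))) in *.
  set (B := coords_lor4 (jet_lam j) (jet_gauss_d j (jet_nu_y j)) (jet_gauss_d j (jet_nu_y j))) in *.
  set (C := coords_lor4 (jet_lam j) (jet_gauss_d j (jet_nu_x j)) (jet_gauss_d j (jet_nu_y j))) in *.
  unfold coords_lor4, jet_psi_x, jet_psi_y, jet_eta_x, jet_eta_y in *. cbn in *.
  apply injective_projections; cbn; field_simplify; auto; lra.
Qed.

End Surface.

Theorem mainTheorem4 (Om : R -> R -> Prop) (psi eta : R -> R -> vec) :
  open2 Om -> connected2 Om ->
  conformal_immersion_H2xR Om psi ->
  not_locally_constant Om (fun x y => psi x y 3%nat) ->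
  canonical_unit_normal Om psi eta ->
  (forall x y, Om x y -> meanH psi eta x y = 1 / 2) ->
  harmonic_H2 Om (hypGauss psi eta) /\
  (forall x y, Om x y ->
     lor3C (dz (hypGauss psi eta) x y) (dz (hypGauss psi eta) x y)
     = (- abreschQ psi eta x y)%C).
Proof.
  intros Om_open _ [psi_smooth psi_conf] _ [eta_smooth eta_normal] mean_curvature_half.
  assert (psi_in_H2 : forall x y, Om x y -> lor3 (psi x y) (psi x y) = -1) by apply psi_conf.
  assert (psi_conformal : forall x y, Om x y ->
    lor4 (dx psi x y) (dx psi x y) = lor4 (dy psi x y) (dy psi x y)) by apply psi_conf.
  assert (psi_x_psi_y : forall x y, Om x y -> lor4 (dx psi x y) (dy psi x y) = 0) by apply psi_conf.
  assert (lam_pos : forall x y, Om x y -> 0 < lor4 (dx psi x y) (dx psi x y)) by apply psi_conf.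
  assert (eta_psi_x : forall x y, Om x y -> lor4 (eta x y) (dx psi x y) = 0) by apply eta_normal.
  assert (eta_psi_y : forall x y, Om x y -> lor4 (eta x y) (dy psi x y) = 0) by apply eta_normal.
  assert (eta_psi : forall x y, Om x y -> lor3 (eta x y) (psi x y) = 0) by apply eta_normal.
  assert (eta_unit : forall x y, Om x y -> lor4 (eta x y) (eta x y) = 1) by apply eta_normal.
  assert (u_pos : forall x y, Om x y -> 0 < eta x y 3%nat) by apply eta_normal.
  split; intros x y H.
  - apply (gauss_map_harmonic Om psi eta); assumption.
  - apply (gauss_map_hopf Om psi eta); assumption.
Qed.
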